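(* For a natural number $j$ and real $X\ge1$, let $N_j^*(X)$ be the number of tuples $(d_1,\dots,d_j)$ of natural numbers $d_k\ge1$ with $\prod_{k=1}^j(3d_k)\le X$. Let $j\ge2$. Then $N_j^*(X)=0$ for $X<3^j$, and for $X\ge 3^j$, $$N_j^*(X)\le \frac{1}{(j-1)!}\,\frac13\Big(\frac23\Big)^{j-1}X\,\Big(\log\Big(\frac13\Big(\frac23\Big)^{j-1}X\Big)\Big)^{j-1}.$$ *)

From HB Require Import structures.
From mathcomp Require Import all_boot all_order all_algebra.
From mathcomp Require Import all_classical all_reals all_analysis.
Set Implicit Arguments. Unset Strict Implicit. Unset Printing Implicit Defensive.
Import Order.TTheory GRing.Theory Num.Theory.
Local Open Scope ring_scope.

(* Every such d_k satisfies d_k <= X, so we may enumerate tuples with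
   entries in {0,..,truncn X} (truncn X = floor X for X >= 0); the
   restriction is therefore no loss. *)
Definition Nstar (R : realType) (j : nat) (X : R) : nat :=
  #|[set d : {ffun 'I_j -> 'I_(Num.truncn X).+1} |
      [forall k, (0 < (d k : nat))%N] &&
      (((\prod_(k < j) (3 * (d k : nat)))%N)%:R <= X)]|.

(* Let N_j(K) be the number of j-tuples of positive integers with product at
   most K.  Then N_j^*(X) <= N_j(floor(X) / 3^j), N_1(K) = K, and
   N_{m+2}(K) = sum_{d <= K} N_{m+1}(K / d).  By induction
   N_{m+1}(K) <= (2^m K) ln(2^m K)^m / m!: the inductive step reduces to
   sum_{d <= K} (L - ln d)^m / d with L = ln(2^m K), which is bounded like the
   integral of (L - ln t)^m / t, i.e. by L^m + L^(m+1)/(m+1), and the stray L^m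
   is absorbed into 2 (L + ln 2)^(m+1)/(m+1) because ln 2 >= 1/2.  Finally
   t |-> t ln(t)^m is increasing on [1, oo) and 2^m K <= (2/3)^m X / 3 for
   K = floor(X) / 3^(m+1). *)

From HB Require Import structures.
From mathcomp Require Import all_boot all_order all_algebra.
From mathcomp Require Import all_classical all_reals all_analysis.
From mathcomp Require Import ring lra.
Set Implicit Arguments. Unset Strict Implicit. Unset Printing Implicit Defensive.
Import Order.TTheory GRing.Theory Num.Theory.
Local Open Scope ring_scope.

Lemma ler_mul_subrXX (R : numDomainType) (m : nat) (a b : R) :
  0 <= b -> b <= a -> m.+1%:R * b ^+ m * (a - b) <= a ^+ m.+1 - b ^+ m.+1.
Proof.
move=> b0 ba; rewrite subrXX [leRHS]mulrC ler_wpM2r ?subr_ge0 //=.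
have -> : m.+1%:R * b ^+ m = \sum_(i < m.+1) b ^+ m.
  by rewrite sumr_const card_ord mulr_natl.
apply: ler_sum => i _; have im : (i <= m)%N := leq_ord i.
rewrite -{1}(subnK im) exprD ler_wpM2r ?exprn_ge0 //.
by rewrite lerXn2r ?nnegrE // (le_trans b0).
Qed.

Lemma invD1_le_lnD1B (R : realType) (x : R) : 0 < x ->
  (x + 1)^-1 <= ln (x + 1) - ln x.
Proof.
move=> x0; have x1 : 0 < x + 1 := addr_gt0 x0 ltr01.
have : -1 < - (x + 1)^-1 by rewrite ltrN2 invf_lt1 // ltrDr.
have -> : ln (x + 1) - ln x = - ln (1 - (x + 1)^-1).
  have -> : 1 - (x + 1)^-1 = x / (x + 1) by field; rewrite gt_eqF.
  by rewrite ln_div ?posrE // opprB.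
by move=> /le_ln1Dx; rewrite lerNr.
Qed.

Lemma half_le_ln2 (R : realType) : 2^-1 <= ln (2 : R).
Proof. by have := invD1_le_lnD1B (@ltr01 R); rewrite ln1 subr0. Qed.

Lemma ler_mul_lnXn (R : realType) (m : nat) (x y : R) : 1 <= x -> x <= y ->
  x * ln x ^+ m <= y * ln y ^+ m.
Proof.
move=> x1 xy; have x0 : 0 < x by exact: lt_le_trans ltr01 x1.
have y0 : 0 < y by exact: lt_le_trans xy.
have lnx0 : 0 <= ln x by rewrite ln_ge0.
have lnxy : ln x <= ln y by rewrite ler_ln ?posrE.
have lnX : ln x ^+ m <= ln y ^+ m.
  by apply: lerXn2r; rewrite ?nnegrE // (le_trans lnx0).
exact: ler_pM (ltW x0) (exprn_ge0 _ lnx0) xy lnX.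
Qed.

Lemma inv_lnBXn_le (R : realType) (m : nat) (x L : R) :
  0 < x -> ln (x + 1) <= L ->
  (x + 1)^-1 * (L - ln (x + 1)) ^+ m <=
    ((L - ln x) ^+ m.+1 - (L - ln (x + 1)) ^+ m.+1) / m.+1%:R.
Proof.
move=> x0 lnL; set a := L - ln x; set b := L - ln (x + 1).
have lnD1 := invD1_le_lnD1B x0.
have b0 : 0 <= b by rewrite subr_ge0.
have ab : a - b = ln (x + 1) - ln x by rewrite /a /b; lra.
have ba : b <= a.
  have : 0 < (x + 1)^-1 by rewrite invr_gt0 addr_gt0.
  by rewrite -subr_ge0 ab; lra.
rewrite ler_pdivlMr ?ltr0n //; apply: le_trans (ler_mul_subrXX m b0 ba).
have mb0 : 0 <= m.+1%:R * b ^+ m by rewrite mulr_ge0 ?exprn_ge0.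
have := ler_wpM2l mb0 lnD1; rewrite ab; lra.
Qed.

Lemma sum_inv_lnBXn_le (R : realType) (m K : nat) (L : R) :
  (0 < K)%N -> ln K%:R <= L ->
  \sum_(1 <= d < K.+1) d%:R^-1 * (L - ln d%:R) ^+ m <=
    L ^+ m + (L ^+ m.+1 - (L - ln K%:R) ^+ m.+1) / m.+1%:R.
Proof.
elim: K => [//|K IH] _ lnL; case: (posnP K) => [->|K0].
  by rewrite big_nat1 invr1 mul1r ln1 subr0 subrr mul0r addr0.
have lnK : ln K%:R <= L.
  by apply: le_trans lnL; rewrite ler_ln ?posrE ?ltr0n ?ler_nat.
rewrite big_nat_recr //=; apply: le_trans (lerD (IH K0 lnK) _) _.
  by rewrite -natr1; apply: inv_lnBXn_le; rewrite ?ltr0n ?natr1.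
by rewrite -addrA -mulrDl addrA subrK natr1.
Qed.

Lemma sum_inv_lnBXn_le_ln2 (R : realType) (m K : nat) (L : R) :
  (0 < K)%N -> ln K%:R <= L ->
  \sum_(1 <= d < K.+1) d%:R^-1 * (L - ln d%:R) ^+ m <=
    2 * (L + ln 2) ^+ m.+1 / m.+1%:R.
Proof.
move=> K0 lnL; apply: le_trans (sum_inv_lnBXn_le m K0 lnL) _.
have L0 : 0 <= L by apply: le_trans lnL; rewrite ln_ge0 ?ler1n.
have lnK0 : 0 <= L - ln K%:R by rewrite subr_ge0.
have ln2 := half_le_ln2 R.
have cL0 : 0 <= m.+1%:R * L ^+ m by rewrite mulr_ge0 ?exprn_ge0.
have LLln2 : L <= L + ln 2 by rewrite lerDl; lra.
have gap : m.+1%:R * L ^+ m * ln 2 <= (L + ln 2) ^+ m.+1 - L ^+ m.+1.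
  by have := ler_mul_subrXX m L0 LLln2; rewrite addrAC subrr add0r.
have half_gap := ler_wpM2l cL0 ln2.
have := exprn_ge0 m.+1 lnK0; have := exprn_ge0 m.+1 L0.
rewrite ler_pdivlMr ?ltr0n // mulrDl divfK ?pnatr_eq0 //; lra.
Qed.

Fixpoint nprod_le (j K : nat) : nat :=
  if j is j'.+1 then (\sum_(1 <= d < K.+1) nprod_le j' (K %/ d))%N else 1%N.

Lemma nprod_le_bound (R : realType) (m K : nat) : (0 < K)%N ->
  (nprod_le m.+1 K)%:R <=
    (m`!%:R)^-1 * (2 ^+ m * K%:R) * ln (2 ^+ m * K%:R) ^+ m :> R.
Proof.
elim: m K => [|m IH] K K0.
  by rewrite /= sum_nat_const_nat subn1 muln1 fact0 invr1 !mul1r expr0 mulr1.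
have c0 : 0 <= (m`!%:R : R)^-1 by rewrite invr_ge0 ler0n.
have pow2_ge1 : 1 <= 2 ^+ m :> R by rewrite exprn_ege1 ?ler1n.
set x : R := 2 ^+ m * K%:R.
have x0 : 0 < x by rewrite mulr_gt0 ?ltr0n // (lt_le_trans ltr01).
have lnK : ln K%:R <= ln x.
  by rewrite ler_ln ?posrE ?ltr0n // ler_peMl ?ler0n.
have term d : (1 <= d < K.+1)%N ->
    (nprod_le m.+1 (K %/ d))%:R <= (m`!%:R)^-1 * x * (d%:R^-1 * (ln x - ln d%:R) ^+ m).
  rewrite ltnS => /andP[d0 dK]; have Kd0 : (0 < K %/ d)%N by rewrite divn_gt0.
  apply: le_trans (IH _ Kd0) _; rewrite -!mulrA ler_wpM2l // !mulrA.
  rewrite -ln_div ?posrE ?ltr0n //; apply: ler_mul_lnXn.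
    by rewrite (le_trans pow2_ge1) // ler_peMr ?ler1n ?(le_trans ler01).
  rewrite -mulrA ler_wpM2l ?(le_trans ler01) // ler_pdivlMr ?ltr0n //.
  by rewrite -natrM ler_nat leq_divM.
rewrite /= natr_sum; apply: le_trans (ler_sum_nat term) _.
rewrite -big_distrr /=; apply: le_trans (ler_wpM2l _ (sum_inv_lnBXn_le_ln2 m K0 lnK)) _.
  by rewrite mulr_ge0 ?ltW.
have -> : 2 ^+ m.+1 * K%:R = 2 * x :> R by rewrite exprS -mulrA.
rewrite lnM ?posrE // (addrC (ln 2)) factS natrM invfM le_eqVlt.
by apply/predU1l; ring.
Qed.

Definition prod_le_tuples (B j K : nat) : {set {ffun 'I_j -> 'I_B}} :=
  [set d : {ffun 'I_j -> 'I_B} | [forall k, (0 < d k)%N] & (\prod_(k < j) d k <= K)%N].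

Lemma leq_card_prod_le_fiber (B j K : nat) (x : 'I_B) :
  (#|[set d in prod_le_tuples B j.+1 K | d ord0 == x]| <=
     if (0 < x <= K)%N then #|prod_le_tuples B j (K %/ x)| else 0)%N.
Proof.
set F := [set d in _ | _].
case: ifP => [/andP[x0 xK] | xK]; last first.
  rewrite leqn0 cards_eq0; apply/eqP/setP => d; rewrite !inE.
  apply: contraFF xK => /andP[/andP[/forallP d0 dK] /eqP <-].
  rewrite d0 /=; apply: leq_trans dK; rewrite big_ord_recl leq_pmulr //.
  by rewrite prodn_gt0.
pose tl (d : {ffun 'I_j.+1 -> 'I_B}) : {ffun 'I_j -> 'I_B} := [ffun k => d (lift ord0 k)].
have tl_inj : {in F &, injective tl}.
  move=> d1 d2; rewrite !inE => /andP[_ /eqP d1x] /andP[_ /eqP d2x] /ffunP e.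
  apply/ffunP => k; case: (unliftP ord0 k) => [k'|] ->; last by rewrite d1x d2x.
  by have := e k'; rewrite !ffunE.
rewrite -(card_in_imset tl_inj); apply/subset_leq_card/fintype.subsetP.
move=> _ /imsetP[d + ->]; rewrite !inE => /andP[/andP[/forallP d0 dK] /eqP dx].
apply/andP; split; first by apply/forallP => k; rewrite ffunE.
rewrite leq_divRL // mulnC; under eq_bigr do rewrite ffunE.
by move: dK; rewrite big_ord_recl dx.
Qed.

Lemma leq_card_prod_le_tuples (B j K : nat) : (#|prod_le_tuples B j K| <= nprod_le j K)%N.
Proof.
elim: j K => [|j IH] K.
  by rewrite (leq_trans (max_card _)) // card_ffun !card_ord.
rewrite -sum1_card (partition_big (fun d : {ffun _ -> 'I_B} => d ord0) predT) //=.
have fiber (x : 'I_B) : (\sum_(d in prod_le_tuples B j.+1 K | d ord0 == x) 1 <=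
    if (0 < x <= K)%N then nprod_le j (K %/ x) else 0)%N.
  rewrite sum1dep_card (leq_trans (leq_card_prod_le_fiber j K x)) //.
  by case: ifP => // _; apply: IH.
apply: (leq_trans (leq_sum _ (fun x _ => fiber x))).
rewrite -(big_mkord xpredT (fun x => if (0 < x <= K)%N then nprod_le j (K %/ x) else 0)).
rewrite -big_mkcond /=.
apply: (uniq_sub_le_big_cond leqnn (fun a b => leq_addr b a));
  rewrite ?filter_uniq ?iota_uniq //.
by move=> d; rewrite !mem_filter !mem_index_iota ltnS => /andP[/andP[-> ->]].
Qed.

Lemma Nstar_le_nprod (R : realType) (j : nat) (X : R) : 0 <= X ->
  (Nstar j X <= nprod_le j (Num.truncn X %/ 3 ^ j))%N.
Proof.
move=> X0; apply: leq_trans (leq_card_prod_le_tuples _ j _).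
apply/subset_leq_card/fintype.subsetP => d; rewrite !inE => /andP[-> dX] /=.
rewrite leq_divRL ?expn_gt0 // truncn_ge_nat //.
by move: dX; rewrite big_split /= prod_nat_const card_ord mulnC.
Qed.

Theorem lemma2 (R : realType) (j : nat) (X : R) :
  (2 <= j)%N -> 1 <= X ->
  (X < 3 ^+ j -> Nstar j X = 0%N) /\
  (3 ^+ j <= X ->
     (Nstar j X)%:R <=
       ((j.-1)`!%:R)^-1 * (3^-1 * (2 / 3) ^+ j.-1 * X) *
       (ln (3^-1 * (2 / 3) ^+ j.-1 * X)) ^+ j.-1).
Proof.
case: j => // m _ X1; have X0 : 0 <= X := le_trans ler01 X1.
have := Nstar_le_nprod m.+1 X0; set K := (_ %/ _)%N => NK.
split=> [X3 | X3].
  apply/eqP; rewrite -leqn0 (leq_trans NK) // /K divn_small /= ?big_geq //.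
  by rewrite truncn_lt_nat // natrX.
have K0 : (0 < K)%N by rewrite divn_gt0 ?expn_gt0 // truncn_ge_nat // natrX.
have KX : 2 ^+ m * K%:R <= 3^-1 * (2 / 3) ^+ m * X.
  have -> : 3^-1 * (2 / 3) ^+ m * X = 2 ^+ m * (X / 3 ^+ m.+1) :> R.
    by rewrite expr_div_n exprS; field; rewrite expf_neq0.
  rewrite ler_wpM2l ?exprn_ge0 // ler_pdivlMr ?exprn_gt0 // -natrX -natrM.
  have truncX : (Num.truncn X)%:R <= X by rewrite truncn_le.
  by rewrite (le_trans _ truncX) // ler_nat leq_divM.
rewrite -(ler_nat R) in NK; apply: le_trans NK _.
apply: le_trans (nprod_le_bound R m K0) _.
rewrite -!mulrA ler_wpM2l ?invr_ge0 ?ler0n // !mulrA ler_mul_lnXn //.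
by rewrite mulr_ege1 ?exprn_ege1 ?ler1n.
Qed.
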